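(* Consider the problem $\min_{x\in\mathbb{R}^n} f(x)$ subject to $g_i(x)\le 0$, $i=1,\dots,m$, where $f:\mathbb{R}^n\to\mathbb{R}$ is convex, continuous and bounded below and each $g_i$ is differentiable and $\mu_i$-strongly convex ($\mu_i>0$). Assume there is $\tilde x$ with $g_i(\tilde x)<0$ for all $i$, and that for every minimizer $x_0^*$ of $f$ over $\mathbb{R}^n$ some $i$ has $g_i(x_0^* )>0$. Let $x_i^*=\arg\min_{x\in\mathbb{R}^n}g_i(x)$ and $$\mathcal{X}:=\mathcal{B}\Big(\tilde x,\ \min_{i\in[m]}2\sqrt{\tfrac{-2g_i(x_i^* )}{\mu_i}}\Big).$$ Then the optimal solution $x^*$ of the problem lies in the interior of $\mathcal{X}$.
   Context: $\mathcal{B}(x,r)=\{z:\|z-x\|\le r\}$ is the closed Euclidean ball. $x^*$ denotes an optimal solution of the problem. *)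

From HB Require Import structures.
From mathcomp Require Import all_boot all_order all_algebra.
From mathcomp Require Import all_classical all_reals all_analysis.
Set Implicit Arguments. Unset Strict Implicit. Unset Printing Implicit Defensive.
Import Order.TTheory GRing.Theory Num.Theory.
Import numFieldNormedType.Exports.
Local Open Scope ring_scope.
Local Open Scope classical_set_scope.

Section Defs.
Variables (R : realType) (n : nat).

(* Euclidean norm on R^n (the library norm on matrices is the max norm). *)
Definition enorm (x : 'rV[R]_n) : R := Num.sqrt (\sum_(j < n) (x ord0 j) ^+ 2).

Definition cball (x : 'rV[R]_n) (r : R) : set 'rV[R]_n :=
  [set z | enorm (z - x) <= r].

Definition einterior (A : set 'rV[R]_n) : set 'rV[R]_n :=
  [set x | exists2 e : R, 0 < e & cball x e `<=` A].

Definition convex_fun (f : 'rV[R]_n -> R) : Prop :=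
  forall (x y : 'rV[R]_n) (t : R), 0 <= t <= 1 ->
    f (t *: x + (1 - t) *: y) <= t * f x + (1 - t) * f y.

Definition strongly_convex (mu : R) (g : 'rV[R]_n -> R) : Prop :=
  forall (x y : 'rV[R]_n) (t : R), 0 <= t <= 1 ->
    g (t *: x + (1 - t) *: y)
      <= t * g x + (1 - t) * g y - mu / 2 * t * (1 - t) * enorm (x - y) ^+ 2.

Definition bounded_below (f : 'rV[R]_n -> R) : Prop :=
  exists M : R, forall x, M <= f x.

End Defs.

Definition ord_min (R : realType) (m : nat) (hm : (0 < m)%N) (F : 'I_m -> R) : R :=
  \big[Num.min/F (Ordinal hm)]_(i < m) F i.

From HB Require Import structures.
From mathcomp Require Import all_boot all_order all_algebra.
From mathcomp Require Import all_classical all_reals all_analysis.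
From mathcomp Require Import ring lra.
Import Order.TTheory GRing.Theory Num.Theory.
Import numFieldNormedType.Exports.
Local Open Scope ring_scope.
Local Open Scope classical_set_scope.

(* Strong convexity of g_i around its minimizer x_i^* gives the quadratic
   growth mu_i/2 ||x - x_i^*||^2 <= g_i x - g_i x_i^*.  Hence the sublevel set
   {g_i <= 0} lies in the ball of radius rho_i = sqrt(-2 g_i x_i^* / mu_i)
   around x_i^*, and the Slater point x~ even lies in its interior.  Every
   feasible point, x^* in particular, is therefore at distance < 2 rho_i
   from x~, for every i. *)

Section EuclideanNorm.
Context {R : realType} {n : nat}.
Implicit Types x y z : 'rV[R]_n.

Lemma enorm_ge0 x : 0 <= enorm x.
Proof. exact: sqrtr_ge0. Qed.

Lemma enorm_sqr x : enorm x ^+ 2 = \sum_j x ord0 j ^+ 2.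
Proof. by rewrite sqr_sqrtr //; apply: sumr_ge0 => j _; exact: sqr_ge0. Qed.

Lemma enorm_eq0_coord x : enorm x = 0 -> forall j, x ord0 j = 0.
Proof.
move=> x0 j; apply/eqP; rewrite -sqrf_eq0.
have /eqP := enorm_sqr x; rewrite x0 expr0n eq_sym psumr_eq0 /=.
  by move=> /allP/(_ j (mem_index_enum j)).
by move=> i _; exact: sqr_ge0.
Qed.

Lemma cauchy_schwarz x y :
  \sum_j x ord0 j * y ord0 j <= enorm x * enorm y.
Proof.
set A := enorm x; set B := enorm y; set S := \sum_j _.
have [AB_gt0 | AB_le0] := ltrP 0 (A * B).
  have : 0 <= \sum_j (B * x ord0 j - A * y ord0 j) ^+ 2.
    by apply: sumr_ge0 => j _; exact: sqr_ge0.
  have -> : \sum_j (B * x ord0 j - A * y ord0 j) ^+ 2 =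
      B ^+ 2 * \sum_j x ord0 j ^+ 2 + A ^+ 2 * \sum_j y ord0 j ^+ 2 - 2 * (A * B) * S.
    rewrite /S !mulr_sumr -big_split -sumrB /=.
    by apply: eq_bigr => j _; ring.
  rewrite -!enorm_sqr -/A -/B; nra.
have : A * B == 0 by rewrite eq_le AB_le0 mulr_ge0 //; exact: enorm_ge0.
rewrite mulf_eq0 => /orP[] /eqP AB0;
  rewrite AB0 ?(mul0r, mulr0) /S big1 // => j _.
  by rewrite (enorm_eq0_coord _ AB0 j) mul0r.
by rewrite (enorm_eq0_coord _ AB0 j) mulr0.
Qed.

Lemma enormD x y : enorm (x + y) <= enorm x + enorm y.
Proof.
rewrite -ler_sqr ?nnegrE ?addr_ge0 ?enorm_ge0 //.
have -> : enorm (x + y) ^+ 2 =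
    enorm x ^+ 2 + enorm y ^+ 2 + 2 * \sum_j x ord0 j * y ord0 j.
  rewrite !enorm_sqr mulr_sumr -!big_split /=.
  by apply: eq_bigr => j _; rewrite mxE; ring.
have := cauchy_schwarz x y; nra.
Qed.

Lemma enorm_le_sqrt x a : 0 <= a -> (enorm x <= Num.sqrt a) = (enorm x ^+ 2 <= a).
Proof. by move=> a_ge0; rewrite [in LHS]/enorm ler_sqrt // -enorm_sqr. Qed.

Lemma enorm_lt_sqrt x a : 0 < a -> (enorm x < Num.sqrt a) = (enorm x ^+ 2 < a).
Proof. by move=> a_gt0; rewrite [in LHS]/enorm ltr_sqrt // -enorm_sqr. Qed.

Lemma enormN x : enorm (- x) = enorm x.
Proof. by rewrite /enorm; congr Num.sqrt; apply: eq_bigr => j _; rewrite mxE sqrrN. Qed.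

Lemma enorm_distC x y : enorm (x - y) = enorm (y - x).
Proof. by rewrite -enormN opprB. Qed.

Lemma enorm_distD x y z : enorm (x - z) <= enorm (x - y) + enorm (y - z).
Proof. by rewrite -[x - z](subrKA y) enormD. Qed.

Lemma cball_interior x c r : enorm (x - c) < r -> einterior (cball c r) x.
Proof.
move=> xc_lt_r; exists (r - enorm (x - c)); first by rewrite subr_gt0.
move=> z; rewrite /cball /= => zx_le; have := enorm_distD z x c; lra.
Qed.

End EuclideanNorm.

Section StronglyConvex.
Context {R : realType} {n : nat} {mu : R} {g : 'rV[R]_n -> R} {c : 'rV[R]_n}.
Hypotheses (mu_gt0 : 0 < mu) (g_sc : strongly_convex mu g)
  (c_min : forall y, g c <= g y).

Lemma strongly_convex_quadratic_growth x :
  mu / 2 * enorm (x - c) ^+ 2 <= g x - g c.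
Proof.
set a := g x - g c; set b := mu / 2 * enorm (x - c) ^+ 2.
have a_ge0 : 0 <= a by rewrite subr_ge0.
rewrite leNgt; apply/negP => ab.
have b_gt0 : 0 < b by apply: le_lt_trans ab.
(* At t = (b - a) / (2 b) the two bounds on g along [c, x] force (a + b) / 2 <= a. *)
set t := (b - a) / (2 * b).
have tb : t * (2 * b) = b - a by rewrite /t mulfVK // mulf_neq0 // gt_eqF.
have t_gt0 : 0 < t by rewrite /t divr_gt0 // ?subr_gt0 // mulr_gt0.
have t01 : 0 <= t <= 1 by rewrite ltW //= /t ler_pdivrMr; lra.
have sc := g_sc x c t t01; have c_le := c_min (t *: x + (1 - t) *: c).
have : 0 <= t * a - t * (1 - t) * b.
  by rewrite /a /b; move: sc c_le; set G := g _; nra.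
nra.
Qed.

Lemma strongly_convex_sublevel_le x :
  g x <= 0 -> enorm (x - c) <= Num.sqrt (- (2 * g c) / mu).
Proof.
move=> gx_le0; have growth := strongly_convex_quadratic_growth x.
have gc_le_gx := c_min x.
rewrite enorm_le_sqrt; last by apply: divr_ge0 (ltW mu_gt0); lra.
by rewrite ler_pdivlMr //; nra.
Qed.

Lemma strongly_convex_sublevel_lt x :
  g x < 0 -> enorm (x - c) < Num.sqrt (- (2 * g c) / mu).
Proof.
move=> gx_lt0; have growth := strongly_convex_quadratic_growth x.
have gc_le_gx := c_min x.
by rewrite enorm_lt_sqrt ?divr_gt0 // ?ltr_pdivlMr //; nra.
Qed.

End StronglyConvex.

Lemma lt_ord_min (R : realType) (m : nat) (hm : (0 < m)%N) (F : 'I_m -> R) a :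
  (forall i, a < F i) -> a < ord_min hm F.
Proof. by move=> aF; apply: (big_ind (fun y => a < y)) => // y z; rewrite lt_min => ->. Qed.

Theorem proposition3 (R : realType) (n m : nat) (hm : (0 < m)%N)
  (f : 'rV[R]_n -> R) (g : 'I_m -> 'rV[R]_n -> R) (mu : 'I_m -> R)
  (xt : 'rV[R]_n) (xs : 'I_m -> 'rV[R]_n) (xstar : 'rV[R]_n) :
  convex_fun f -> continuous f -> bounded_below f ->
  (forall i, 0 < mu i) ->
  (forall i x, differentiable (g i) x) ->
  (forall i, strongly_convex (mu i) (g i)) ->
  (forall i, g i xt < 0) ->
  (forall x0, (forall x, f x0 <= f x) -> exists i, 0 < g i x0) ->
  (forall i x, g i (xs i) <= g i x) ->
  (* xstar is an optimal solution of min f s.t. g_i <= 0 *)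
  (forall i, g i xstar <= 0) ->
  (forall x, (forall i, g i x <= 0) -> f xstar <= f x) ->
  einterior (cball xt
    (ord_min hm (fun i => 2 * Num.sqrt (- (2 * g i (xs i)) / mu i)))) xstar.
Proof.
move=> _ _ _ mu_gt0 _ g_sc g_xt_lt0 _ xs_min g_xstar_le0 _.
apply: cball_interior; apply: lt_ord_min => i.
have xstar_near :=
  strongly_convex_sublevel_le (mu_gt0 i) (g_sc i) (xs_min i) _ (g_xstar_le0 i).
have xt_near :=
  strongly_convex_sublevel_lt (mu_gt0 i) (g_sc i) (xs_min i) _ (g_xt_lt0 i).
have := enorm_distD xstar (xs i) xt; rewrite (enorm_distC (xs i)); lra.
Qed.
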